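(* Let $G=(K\cup I,E)$ be a split graph such that no vertex $i\in I$ satisfies $N(i)=K$, and let $(V,\mathcal{F})$ be its split graph vertex shelling antimatroid. Then the number of paths of $(V,\mathcal{F})$ equals $|V|$ plus the number of edges of $G$ having one endpoint in $K$ and the other in $I$.
   Context: A split graph $G=(K\cup I,E)$ is a finite simple graph whose vertex set $V=K\cup I$ comes with a fixed partition into a clique $K$ and an independent set $I$. $N(v)$ is the set of neighbours of $v$. A vertex is simplicial if its neighbours induce a clique. The split graph vertex shelling antimatroid of $G$ is $(V,\mathcal{F})$ where $F\subseteq V$ is feasible iff there is an ordering $f_1,\dots,f_{|F|}$ of $F$ such that each $f_j$ is simplicial in $G$ minus $\{f_1,\dots,f_{j-1}\}$ (the empty set is feasible). A path of an antimatroid $(V,\mathcal{F})$ is a nonempty feasible set that is not the union of two feasible sets both different from it (equivalently, a feasible set containing exactly one element whose removal leaves a feasible set). *)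

From mathcomp Require Import all_boot.
From Stdlib Require Import ClassicalEpsilon.
Set Implicit Arguments. Unset Strict Implicit. Unset Printing Implicit Defensive.

Definition simple_graph (T : finType) (e : rel T) : Prop :=
  symmetric e /\ irreflexive e.

(* Split graph with fixed partition: K a clique, the complement I := ~: K
   an independent set. *)
Definition split_partition (T : finType) (e : rel T) (K : {set T}) : Prop :=
  (forall x y, x \in K -> y \in K -> x != y -> e x y) /\
  (forall x y, x \notin K -> y \notin K -> ~~ e x y).

Definition nbhd (T : finType) (e : rel T) (v : T) : {set T} := [set u | e v u].

Definition simplicial_in (T : finType) (e : rel T) (W : {set T}) (v : T) : bool :=
  [forall x, forall y,
     [&& x \in W, y \in W, e v x, e v y & x != y] ==> e x y].

(* The ordering s = f_1 ... f_k is a shelling: each f_j is simplicial in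
   G minus {f_1,...,f_{j-1}}; here 'removed' is the set already deleted. *)
Fixpoint shelling_seq (T : finType) (e : rel T) (removed : {set T}) (s : seq T)
  : bool :=
  match s with
  | [::] => true
  | x :: s' => simplicial_in e (~: removed) x && shelling_seq e (x |: removed) s'
  end.

Definition feasible (T : finType) (e : rel T) (F : {set T}) : Prop :=
  exists s : seq T, [/\ uniq s, F = [set x in s] & shelling_seq e set0 s].

Definition is_path (T : finType) (e : rel T) (F : {set T}) : Prop :=
  [/\ feasible e F, F != set0 &
      ~ (exists A B : {set T}, [/\ feasible e A, feasible e B,
                                  A != F, B != F & F = A :|: B])].

Definition asbool (P : Prop) : bool :=
  if excluded_middle_informative P then true else false.

From mathcomp Require Import all_boot.
From Stdlib Require Import ClassicalEpsilon.
Set Implicit Arguments. Unset Strict Implicit. Unset Printing Implicit Defensive.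

(* Every path F of an antimatroid has a unique endpoint x, the last vertex of
   any shelling of F, and F is the only feasible subset of itself containing
   x. In a split graph a vertex of I can always be shelled, so {x} is its
   path; a vertex k of K can be shelled once at most one I-neighbour j of k
   survives and j is adjacent to every remaining vertex of K. Hence the paths
   ending at k are k + N_I(k) and, for each I-neighbour j of k, the least
   feasible set containing k but not j. The condition N(j) <> K supplies a
   vertex of K outside N(j), which has to be shelled before k in the latter
   case; this is what makes k + N_I(k) minimal. *)

Lemma asboolP (P : Prop) : reflect P (asbool P).
Proof. by rewrite /asbool; case: excluded_middle_informative; constructor. Qed.

Section ShellingAntimatroid.
Variables (T : finType) (e : rel T).

Lemma simplicialP (W : {set T}) v :
  reflect (forall x y, x \in W -> y \in W -> e v x -> e v y -> x != y -> e x y)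
          (simplicial_in e W v).
Proof.
apply: (iffP forallP) => [H x y xW yW vx vy xy | H x].
  by have /forallP/(_ y)/implyP := H x; apply; rewrite xW yW vx vy xy.
by apply/forallP => y; apply/implyP => /and5P[]; exact: H.
Qed.

Lemma simplicial_inS (W W' : {set T}) v :
  W' \subset W -> simplicial_in e W v -> simplicial_in e W' v.
Proof.
move=> /subsetP sW'W /simplicialP simp_v; apply/simplicialP => x y xW yW.
exact: simp_v (sW'W _ xW) (sW'W _ yW).
Qed.

Lemma shelling_seq_cat (R : {set T}) (s t : seq T) :
  shelling_seq e R (s ++ t) =
  shelling_seq e R s && shelling_seq e (R :|: [set x in s]) t.
Proof.
elim: s R => [|x s IHs] R /=.
  by congr shelling_seq; apply/setP => y; rewrite !inE orbF.
rewrite IHs andbA; congr (_ && shelling_seq _ _ _).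
by apply/setP => y; rewrite !inE orbCA orbA.
Qed.

Lemma shelling_seq_simplicial (R : {set T}) (t : seq T) :
  {in t, forall x, simplicial_in e (~: R) x} -> shelling_seq e R t.
Proof.
elim: t R => [|x t IHt] R //= simp_t.
rewrite simp_t ?mem_head //=; apply: IHt => y yt.
apply: simplicial_inS (simp_t y _); first by rewrite setCS subsetUr.
by rewrite in_cons yt orbT.
Qed.

Lemma shelling_seq_simplicial_at (R : {set T}) (s : seq T) x :
  shelling_seq e R s -> x \in s ->
  simplicial_in e (~: (R :|: [set y in take (index x s) s])) x.
Proof.
elim: s R => [|a s IHs] R //= /andP[simp_a shell_s]; rewrite in_cons.
have [-> _|xa /= xs] := eqVneq x a.
  by apply: simplicial_inS simp_a; rewrite setCS subsetUl.
apply: simplicial_inS (IHs _ shell_s xs); rewrite setCS.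
by apply/subsetP => y; rewrite !inE orbCA orbA.
Qed.

(* [take (index v s) s] are the vertices shelled before [v]. *)
Lemma shelling_nonadjacent_nbrs (s : seq T) v a b :
  shelling_seq e set0 s -> v \in s -> e v a -> e v b -> a != b -> ~~ e a b ->
  (a \in take (index v s) s) || (b \in take (index v s) s).
Proof.
move=> shell_s vs va vb ab; apply: contraNT; rewrite negb_or => /andP[aW bW].
have /simplicialP := shelling_seq_simplicial_at shell_s vs.
by rewrite set0U; apply; rewrite // !inE.
Qed.

Lemma feasible0 : feasible e set0.
Proof. by exists [::]; split => //; apply/setP => y; rewrite !inE. Qed.

Lemma feasible_setU_simplicial (F A : {set T}) :
  feasible e F -> {in A, forall x, simplicial_in e (~: F) x} ->
  feasible e (F :|: A).
Proof.
move=> [s [uniq_s -> shell_s]] simp_A.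
exists (s ++ enum (A :\: [set x in s])); split.
- rewrite cat_uniq uniq_s enum_uniq andbT /=; apply/hasPn => y.
  by rewrite mem_enum !inE => /andP[].
- by apply/setP => y; rewrite !inE mem_cat mem_enum !inE; case: (y \in s).
- rewrite shelling_seq_cat shell_s /= set0U; apply: shelling_seq_simplicial => y.
  by rewrite mem_enum !inE => /andP[_ /simp_A].
Qed.

Lemma feasible_last (F : {set T}) :
  feasible e F -> F != set0 -> exists2 x, x \in F & feasible e (F :\ x).
Proof.
case=> s [+ -> +]; case/lastP: s => [|s x] + + nz.
  by case/set0Pn: nz => y; rewrite inE.
rewrite rcons_uniq -cats1 shelling_seq_cat => /andP[xs uniq_s] /andP[shell_s _].
exists x; first by rewrite inE mem_cat mem_head orbT.
exists s; split => //; apply/setP => y; rewrite !inE mem_cat inE orbC.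
by case: eqVneq => // ->; rewrite (negbTE xs).
Qed.

Definition path_endpoint (x : T) (F : {set T}) : Prop :=
  [/\ feasible e F, x \in F &
      forall A, feasible e A -> x \in A -> A \subset F -> A = F].

Lemma is_path_endpointP (F : {set T}) :
  is_path e F <-> exists x, path_endpoint x F.
Proof.
split=> [[feas_F F0 not_union] | [x [feas_F xF min_F]]].
  have [x xF feas_Fx] := feasible_last feas_F F0.
  exists x; split=> // A feas_A xA sAF; apply/eqP/negPn/negP => AF.
  apply: not_union; exists A, (F :\ x); split=> //.
    by apply/eqP => /setP/(_ x); rewrite xF setD11.
  apply/setP => y; rewrite !inE; have [->|_] := eqVneq y x; first by rewrite xA.
  by have [/(subsetP sAF)->|] := boolP (y \in A).
split=> //; first by apply/set0Pn; exists x.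
case=> A [B [feas_A feas_B AF BF defF]].
have /setUP[xA|xB] : x \in A :|: B by rewrite -defF.
  by move: AF; rewrite (min_F A) ?eqxx // defF subsetUl.
by move: BF; rewrite (min_F B) ?eqxx // defF subsetUr.
Qed.

Lemma path_endpoint_unique x y (F : {set T}) :
  path_endpoint x F -> path_endpoint y F -> x = y.
Proof.
move=> endx endy; case: (endx) => feas_F xF _.
have [|z zF feas_Fz] := feasible_last feas_F; first by apply/set0Pn; exists x.
suff to_z w : path_endpoint w F -> w = z by rewrite (to_z x) // (to_z y).
case=> _ wF min_F; apply/eqP/negPn/negP => wz.
have wFz : w \in F :\ z by rewrite !inE wz.
have /setP/(_ z) := min_F _ feas_Fz wFz (subD1set F z).
by rewrite setD11 zF.
Qed.

End ShellingAntimatroid.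

Section SplitGraph.
Variables (T : finType) (e : rel T) (K : {set T}).
Hypotheses (e_sym : symmetric e) (e_irr : irreflexive e).
Hypothesis K_clique : forall x y, x \in K -> y \in K -> x != y -> e x y.
Hypothesis I_indep : forall x y, x \notin K -> y \notin K -> ~~ e x y.

Lemma nbr_of_I_in_K x y : x \notin K -> e x y -> y \in K.
Proof. by move=> xK; apply: contraTT => yK; exact: I_indep. Qed.

Lemma simplicial_I (W : {set T}) x : x \notin K -> simplicial_in e W x.
Proof.
move=> xK; apply/simplicialP => y z _ _ xy xz; apply: K_clique.
  exact: nbr_of_I_in_K xy.
exact: nbr_of_I_in_K xz.
Qed.

Lemma simplicial_no_I_nbr (W : {set T}) x :
  (forall z, z \notin K -> e x z -> z \notin W) -> simplicial_in e W x.
Proof.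
move=> no_I_nbr; apply/simplicialP => y z yW zW xy xz; apply: K_clique.
  by apply: contraTT yW => /no_I_nbr; apply.
by apply: contraTT zW => /no_I_nbr; apply.
Qed.

Lemma simplicial_one_I_nbr (W : {set T}) k j :
  k \in K -> j \notin K ->
  (forall z, z \notin K -> e k z -> z \in W -> z = j) ->
  (forall y, y \in K -> y \in W -> y != k -> e j y) ->
  simplicial_in e W k.
Proof.
move=> kK jK only_j j_adj; apply/simplicialP => y z yW zW ky kz yz.
have nbr_neq_k t : e k t -> t != k by apply: contraTneq => ->; rewrite e_irr.
case yK: (y \in K); case zK: (z \in K).
- exact: K_clique.
- by rewrite (only_j z) ?zK // e_sym; apply: j_adj => //; exact: nbr_neq_k.
- by rewrite (only_j y) ?yK //; apply: j_adj => //; exact: nbr_neq_k.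
- by move: yz; rewrite (only_j y) ?yK // (only_j z) ?zK // eqxx.
Qed.

Definition nbhdI x := [set z | (z \notin K) && e x z].
Definition nonnbK j := [set m in K | ~~ e j m].
Definition KI_edges :=
  [set p : T * T | [&& p.1 \in K, p.2 \notin K & e p.1 p.2]].

Definition vertex_path x := if x \in K then x |: nbhdI x else [set x].

(* The least feasible set containing k but not j: before k goes, every vertex
   of K outside N(j) must go, and before those their I-neighbours. *)
Definition edge_path k j :=
  k |: ((nbhdI k :\ j) :|: \bigcup_(m in nonnbK j) nbhdI m :|: nonnbK j).

Lemma mem_vertex_path x : x \in vertex_path x.
Proof. by rewrite /vertex_path; case: ifP; rewrite !inE eqxx. Qed.

Lemma feasible_vertex_path x : feasible e (vertex_path x).
Proof.
rewrite /vertex_path; case: ifP => xK.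
  rewrite setUC -[nbhdI x]set0U; apply: feasible_setU_simplicial.
    apply: feasible_setU_simplicial; first exact: feasible0.
    by move=> z; rewrite inE => /andP[zK _]; exact: simplicial_I.
  move=> _ /set1P ->; apply: simplicial_no_I_nbr => z zK xz.
  by rewrite !inE zK xz.
rewrite -[[set x]]set0U; apply: feasible_setU_simplicial; first exact: feasible0.
by move=> _ /set1P ->; apply: simplicial_I; rewrite xK.
Qed.

Lemma feasible_edge_path k j :
  k \in K -> j \notin K -> e k j -> feasible e (edge_path k j).
Proof.
move=> kK jK kj; rewrite /edge_path setUC -[_ :|: \bigcup_(m in _) _]set0U.
apply: feasible_setU_simplicial; first apply: feasible_setU_simplicial.
- apply: feasible_setU_simplicial; first exact: feasible0.
  move=> x /setUP[/setD1P[_]|/bigcupP[m _]]; rewrite inE => /andP[+ _].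
    exact: simplicial_I.
  exact: simplicial_I.
- move=> m mS; apply: simplicial_no_I_nbr => z zK mz.
  rewrite !inE negbK; apply/or3P/Or33/bigcupP.
  by exists m; rewrite // inE zK mz.
move=> _ /set1P ->; apply: (simplicial_one_I_nbr kK jK).
  move=> z zK kz; apply: contraTeq => zj.
  by rewrite !inE zj zK kz.
move=> y yK + _; apply: contraTT => jy.
by rewrite !inE yK jy !orbT.
Qed.

Lemma edge_path_notin k j : k \in K -> j \notin K -> j \notin edge_path k j.
Proof.
move=> kK jK; rewrite !inE eqxx (negbTE jK) /= orbF negb_or.
apply/andP; split; first by apply: contraNneq jK => ->.
apply/bigcupP => -[m]; rewrite !inE => /andP[_ /negP jm] /andP[_ mj].
by apply: jm; rewrite e_sym.
Qed.

(* When k leaves a shelling while its I-neighbour j stays, every other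
   neighbour of k must be adjacent to j. *)
Lemma edge_path_subset (F : {set T}) k j :
  feasible e F -> k \in F -> k \in K -> j \notin F -> j \notin K -> e k j ->
  edge_path k j \subset F.
Proof.
move=> [s [_ -> shell_s]] + kK + jK kj; rewrite !inE => kF jF.
have j_late v : j \notin take (index v s) s by apply: contra jF => /mem_take.
have I_nbr_early z : z \notin K -> e k z -> z != j -> z \in take (index k s) s.
  move=> zK kz zj; have := shelling_nonadjacent_nbrs shell_s kF kz kj zj.
  by rewrite I_indep // (negbTE (j_late k)) orbF; apply.
have nonnb_early m : m \in nonnbK j -> m \in take (index k s) s.
  rewrite inE => /andP[mK jm].
  have km : k != m by apply: contraNneq jm => <-; rewrite e_sym.
  have := shelling_nonadjacent_nbrs shell_s kF (K_clique kK mK km) kj.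
  rewrite (negbTE (j_late k)) orbF; apply; last by rewrite e_sym.
  by apply: contraNneq jK => <-.
have nonnb_nbr_in m z : m \in nonnbK j -> z \in nbhdI m -> z \in s.
  move=> mS; rewrite inE => /andP[zK mz]; have mks := nonnb_early m mS.
  move: mS; rewrite inE => /andP[mK jm].
  have [kz|kz] := boolP (e k z).
    apply/mem_take/I_nbr_early => //.
    by apply: contraNneq jm => <-; rewrite e_sym.
  have ms := mem_take mks.
  have k_late : k \notin take (index m s) s.
    by move: mks; rewrite (in_take _ kF) (in_take _ ms) -leqNgt => /ltnW.
  have mk : m != k by apply: contraNneq jm => ->; rewrite e_sym.
  have zk : z != k by apply: contraNneq zK => ->.
  have := shelling_nonadjacent_nbrs shell_s ms mz (K_clique mK kK mk) zk.
  by rewrite e_sym (negbTE kz) (negbTE k_late) orbF => /(_ isT) /mem_take.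
apply/subsetP => x /setU1P[->|/setUP[/setUP[|]|]]; rewrite inE //.
- by rewrite !inE => /and3P[xj xK kx]; exact/mem_take/I_nbr_early.
- by case/bigcupP=> m; exact: nonnb_nbr_in.
- by move/nonnb_early/mem_take.
Qed.

Lemma edge_path_endpoint k j :
  (k, j) \in KI_edges -> path_endpoint e k (edge_path k j).
Proof.
rewrite inE => /and3P[kK jK kj]; split; rewrite ?setU11 //.
  exact: feasible_edge_path.
move=> A feas_A kA sAQ; apply/eqP; rewrite eqEsubset sAQ.
apply: edge_path_subset => //; apply: contra (edge_path_notin kK jK).
exact: subsetP.
Qed.

Hypothesis I_not_universal : forall i, i \notin K -> nbhd e i != K.

Lemma nonnbK_neq0 j : j \notin K -> nonnbK j != set0.
Proof.
move=> jK; apply: contra (I_not_universal jK) => /eqP/setP nonnb0.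
apply/eqP/setP => m; rewrite inE; apply/idP/idP => [|mK].
  exact: nbr_of_I_in_K.
by have := nonnb0 m; rewrite !inE mK /= => /negbFE.
Qed.

Lemma vertex_path_endpoint x : path_endpoint e x (vertex_path x).
Proof.
split; [exact: feasible_vertex_path | exact: mem_vertex_path |].
move=> A feas_A xA sAP; apply/eqP; rewrite eqEsubset sAP /=.
move: sAP; rewrite /vertex_path; case: ifP => xK sAP; last by rewrite sub1set.
apply/subsetP => j /setU1P[-> //|]; rewrite inE => /andP[jK xj].
apply: contraT => jA; have /set0Pn[m mS] := nonnbK_neq0 jK.
have mA : m \in A.
  apply/(subsetP (edge_path_subset feas_A xA xK jA jK xj)).
  by rewrite in_setU1 !in_setU mS !orbT.
move: mS (subsetP sAP m mA); rewrite !inE => /andP[mK jm].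
case/predU1P=> [mx | /andP[/negP] //].
by move: jm; rewrite mx e_sym xj.
Qed.

Lemma path_endpointE x F : path_endpoint e x F ->
  F = vertex_path x \/ exists2 j, (x, j) \in KI_edges & F = edge_path x j.
Proof.
case=> feas_F xF min_F.
have min_vertex_path : vertex_path x \subset F -> F = vertex_path x.
  move=> sPF; apply/esym/min_F; rewrite ?mem_vertex_path //.
  exact: feasible_vertex_path.
have [xK|xI] := boolP (x \in K); last first.
  by left; apply: min_vertex_path; rewrite /vertex_path (negbTE xI) sub1set.
have [j|F_full] := pickP [pred j | (j \in nbhdI x) && (j \notin F)].
  rewrite /= inE => /andP[/andP[jK xj] jF]; right; exists j.
    by rewrite inE xK jK xj.
  apply/esym/min_F; [exact: feasible_edge_path | exact: setU11 |].
  exact: edge_path_subset.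
left; apply: min_vertex_path; rewrite /vertex_path xK.
apply/subsetP => y /setU1P[-> // | yN].
by have := F_full y; rewrite /= yN => /negbFE.
Qed.

Lemma vertex_path_inj : injective vertex_path.
Proof.
move=> x y Exy; apply: path_endpoint_unique (vertex_path_endpoint x) _.
by rewrite Exy; exact: vertex_path_endpoint.
Qed.

Lemma edge_path_inj : {in KI_edges &, injective (fun p => edge_path p.1 p.2)}.
Proof.
move=> [k j] [k' j'] kj kj' /= E.
have kk' : k = k'.
  apply: path_endpoint_unique (edge_path_endpoint kj) _.
  by rewrite E; exact: edge_path_endpoint.
subst k'; congr pair; move: kj kj'.
rewrite !inE /= => /and3P[kK jK _] /and3P[_ jK' kj'].
apply: contraTeq (edge_path_notin kK jK') => jj'.
by rewrite negbK -E !inE (eq_sym j' j) jj' jK' kj' orbT.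
Qed.

Lemma vertex_edge_path_neq x k j :
  (k, j) \in KI_edges -> vertex_path x != edge_path k j.
Proof.
move=> kj; apply/eqP => E.
have xk : x = k.
  apply: path_endpoint_unique (vertex_path_endpoint x) _.
  by rewrite E; exact: edge_path_endpoint.
subst x; move: kj; rewrite inE /= => /and3P[kK jK kj].
by have := edge_path_notin kK jK; rewrite -E /vertex_path kK !inE jK kj orbT.
Qed.

Lemma pathsE : [set F | asbool (is_path e F)] =
  vertex_path @: setT :|: (fun p => edge_path p.1 p.2) @: KI_edges.
Proof.
apply/setP => F; rewrite inE; apply/idP/idP.
  move/asboolP/is_path_endpointP => [x /path_endpointE[->|[j xj ->]]].
    by rewrite inE imset_f.
  by apply/setUP; right; exact: (imset_f (fun p => edge_path p.1 p.2) xj).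
case/setUP => /imsetP[p pE ->]; apply/asboolP/is_path_endpointP.
  by exists p; exact: vertex_path_endpoint.
by case: p pE => k j kj; exists k; exact: edge_path_endpoint.
Qed.

Lemma card_paths : #|[set F | asbool (is_path e F)]| = #|T| + #|KI_edges|.
Proof.
rewrite pathsE cardsU card_imset ?cardsT; last exact: vertex_path_inj.
rewrite card_in_imset; last exact: edge_path_inj.
set paths_at_edges := (fun p => edge_path p.1 p.2) @: KI_edges.
suff /eqP-> : vertex_path @: setT :&: paths_at_edges == set0.
  by rewrite cards0 subn0.
apply/eqP/setP => F; rewrite !inE; apply/negbTE/andP.
case=> /imsetP[x _ ->] /imsetP[[k j] kj /eqP]; exact/negP/vertex_edge_path_neq.
Qed.

End SplitGraph.

Theorem mainTheorem11 (T : finType) (e : rel T) (K : {set T}) :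
  simple_graph e ->
  split_partition e K ->
  (forall i : T, i \notin K -> nbhd e i != K) ->
  #|[set F : {set T} | asbool (is_path e F)]| =
    #|T| + #|[set p : T * T | [&& p.1 \in K, p.2 \notin K & e p.1 p.2]]|.
Proof.
move=> [e_sym e_irr] [K_clique I_indep] I_not_universal.
by apply: card_paths.
Qed.
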